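(* The Taylor coefficients of $\log\mathbb{E}[z^V]=\sum_{k\ge0}q_kz^k$ around $z=0$ are $$q_0=-\frac{\theta}{\gamma}\,{}_2F_1(1,\gamma;1+\gamma;q),\qquad q_k=\theta\,\frac{(k-1)!}{(\gamma+1)_k}\,{}_2F_1(k,\gamma;1+\gamma+k;q)\quad(k\ge1).$$ Hence $\mathbb{P}(V=0)=e^{q_0}$ and $\mathbb{P}(V=n)=\frac1n\sum_{k=0}^{n-1}(n-k)q_{n-k}\mathbb{P}(V=k)$ for $n\ge1$.
   Context: Fix $\delta>0$ and $\alpha>\beta\ge0$, put $\lambda=\alpha-\beta$, $q=\beta/\alpha$, $\gamma=\delta/\lambda$, and fix $\theta>0$. Let $\xi(z)=\frac{q-z}{1-z}$. Let $V$ be a random variable on $\{0,1,\dots\}$ with $\log\mathbb{E}[z^V]=-\frac{\theta}{\gamma}{}_2F_1(1,\gamma;1+\gamma;\xi(z))$ for $z\in[0,1)$, where ${}_2F_1$ is the Gauss hypergeometric function and $(a)_k=\Gamma(a+k)/\Gamma(a)$ is the Pochhammer symbol. *)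

From Stdlib Require Import Reals Lra ClassicalEpsilon Arith Factorial.
Open Scope R_scope.

Fixpoint poch (a : R) (k : nat) : R :=
  match k with
  | O => 1
  | S k' => poch a k' * (a + INR k')
  end.

(* Value of a convergent real series (chosen classically; only used where
   the series converges, in which case it is the unique limit). *)
Definition series_sum (s : nat -> R) : R :=
  epsilon (inhabits 0) (fun l => infinite_sum s l).

Definition hyp2F1_term (a b c x : R) (n : nat) : R :=
  poch a n * poch b n / (poch c n * INR (fact n)) * x ^ n.

Definition hyp2F1 (a b c x : R) : R := series_sum (hyp2F1_term a b c x).

Definition xi (q z : R) : R := (q - z) / (1 - z).

Definition pgf (p : nat -> R) (z : R) : R := series_sum (fun n => p n * z ^ n).

Definition qcoef (theta gamma q : R) (k : nat) : R :=
  match k with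
  | O => - (theta / gamma) * hyp2F1 1 gamma (1 + gamma) q
  | S k' => theta * INR (fact k') / poch (gamma + 1) k
            * hyp2F1 (INR k) gamma (1 + gamma + INR k) q
  end.

From Stdlib Require Import Reals Lra Lia Factorial ClassicalEpsilon.
From Coquelicot Require Import Coquelicot.
Open Scope R_scope.

(* Write L(z) = Σ q_k z^k and U = 2F1(1,γ;1+γ;·) = Σ γ/(γ+n) x^n.  Expanding the
   hypergeometric functions shows |q_k| is bounded, so L converges on the unit disc, and
   comparing coefficients of the resulting double series shows that L solves the linear
   equation (q - z)(1 - z) L' - γ(1 - q) L = θ(1 - z).  Since x U' + γ U = γ/(1 - x), the
   function Φ = -(θ/γ) U∘ξ solves the same equation and Φ(0) = q_0 = L(0); the difference
   times |ξ|^γ is constant, hence Φ = L on some (0, s).  So the generating function G of V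
   equals exp L there; differentiating, G' = G L' coefficientwise, which is the recursion,
   and it makes G exp(-L) constant on the whole disc. *)

Lemma series_sum_eq (s : nat -> R) (l : R) : infinite_sum s l -> series_sum s = l.
Proof.
  intro H. unfold series_sum.
  eapply uniqueness_sum; [|exact H].
  apply (epsilon_spec (inhabits 0) (fun l => infinite_sum s l)). now exists l.
Qed.

Lemma is_series_Rplus (a b : nat -> R) (la lb : R) :
  is_series a la -> is_series b lb -> is_series (fun n => a n + b n) (la + lb).
Proof. exact (is_series_plus a b la lb). Qed.

Lemma is_series_Rscal (c : R) (a : nat -> R) (l : R) :
  is_series a l -> is_series (fun n => c * a n) (c * l).
Proof. exact (is_series_scal c a l). Qed.

Lemma is_series_Rincr_1 (a : nat -> R) (l : R) :
  is_series a l -> is_series (fun k => a (S k)) (l - a O).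
Proof.
  intro H. apply is_series_incr_1.
  unfold plus; simpl. replace (l - a O + a O) with l by ring. exact H.
Qed.

Lemma is_series_Rext (a b : nat -> R) (l : R) :
  (forall n, a n = b n) -> is_series a l -> is_series b l.
Proof. exact (is_series_ext a b l). Qed.

Lemma is_series_zero (a : nat -> R) (l : R) : (forall n, a n = 0) -> is_series a l -> l = 0.
Proof.
  intros Ha Hl.
  assert (H0 : is_series a (0 * l)).
  { apply (is_series_Rext (fun n => 0 * a n)); [intro n; rewrite Ha; ring|].
    exact (is_series_Rscal 0 a l Hl). }
  rewrite <- (is_series_unique _ _ Hl), (is_series_unique _ _ H0). ring.
Qed.

Lemma is_series_ge0 (a : nat -> R) (l : R) : (forall n, 0 <= a n) -> is_series a l -> 0 <= l.
Proof.
  intros Ha Hl.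
  apply (is_lim_seq_le (fun _ => 0) (sum_n a) 0 l); [|apply is_lim_seq_const | exact Hl].
  intro n. rewrite sum_n_Reals. now apply cond_pos_sum.
Qed.

Lemma is_series_geom_scal (c x : R) : Rabs x < 1 -> is_series (fun n => c * x ^ n) (c / (1 - x)).
Proof. intro Hx. exact (is_series_Rscal c _ _ (is_series_geom x Hx)). Qed.

Lemma sum_f_R0_ge_term (f : nat -> R) (N n : nat) :
  (forall k, 0 <= f k) -> (n <= N)%nat -> f n <= sum_f_R0 f N.
Proof.
  intros Hf. induction N; intro Hn.
  - replace n with O by lia. simpl. lra.
  - simpl. destruct (Nat.eq_dec n (S N)) as [->|].
    + pose proof (cond_pos_sum f N Hf). lra.
    + pose proof (Hf (S N)). specialize (IHN ltac:(lia)). lra.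
Qed.

Lemma poch_add (a : R) (n m : nat) : poch a (n + m) = poch a n * poch (a + INR n) m.
Proof.
  induction m as [|m IHm].
  - rewrite Nat.add_0_r; simpl; ring.
  - rewrite Nat.add_succ_r; simpl. rewrite IHm, plus_INR; ring.
Qed.

Lemma pochS (a : R) (n : nat) : poch a (S n) = a * poch (a + 1) n.
Proof. change (S n) with (1 + n)%nat. rewrite poch_add. simpl. f_equal; ring. Qed.

Lemma poch_gt0 (a : R) (n : nat) : 0 < a -> 0 < poch a n.
Proof.
  intro Ha; induction n; simpl; [lra|].
  apply Rmult_lt_0_compat; auto. pose proof (pos_INR n); lra.
Qed.

Lemma poch_le (a b : R) (n : nat) : 0 < a -> a <= b -> poch a n <= poch b n.
Proof.
  intros Ha Hb; induction n; simpl; [lra|].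
  pose proof (pos_INR n). pose proof (poch_gt0 a n Ha).
  apply Rmult_le_compat; lra.
Qed.

Lemma poch1 (n : nat) : poch 1 n = INR (fact n).
Proof.
  induction n as [|n IHn]; [reflexivity|].
  change (poch 1 (S n)) with (poch 1 n * (1 + INR n)).
  change (fact (S n)) with (S n * fact n)%nat.
  rewrite IHn, mult_INR, S_INR. ring.
Qed.

Lemma fact_add_poch (K m : nat) : INR (fact (K + m)) = INR (fact K) * poch (1 + INR K) m.
Proof. rewrite <- !poch1, poch_add. reflexivity. Qed.

Lemma CV_radius_ge_1 (a : nat -> R) (M : R) :
  (forall n, Rabs (a n) <= M) -> Rbar_le 1 (CV_radius a).
Proof.
  intro H. apply (proj1 (CV_radius_bounded a)).
  exists M. intro n. rewrite pow1, Rmult_1_r. auto.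
Qed.

Lemma Rbar_lt_Rabs (r : Rbar) (e x : R) : Rbar_le e r -> Rabs x < e -> Rbar_lt (Rabs x) r.
Proof. intros H1 H2. destruct r; simpl in *; auto; lra. Qed.

Lemma is_series_PSeries (a : nat -> R) (x : R) :
  Rbar_lt (Rabs x) (CV_radius a) -> is_series (fun n => a n * x ^ n) (PSeries a x).
Proof. intro H. apply is_pseries_R, PSeries_correct, CV_radius_inside, H. Qed.

Lemma CV_radius_ge_ex_pseries (a : nat -> R) (r : R) :
  ex_pseries a r -> Rbar_le (Rabs r) (CV_radius a).
Proof.
  intro H. apply (proj1 (CV_radius_bounded a)).
  set (t := fun k => Rabs (a k * r ^ k)).
  assert (Ht : is_lim_seq (fun n => a n * r ^ n) 0).
  { destruct H as [l Hl]. apply ex_series_lim_0. exists l. now apply is_pseries_R. }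
  apply is_lim_seq_Reals in Ht. destruct (Ht 1 Rlt_0_1) as [N HN].
  exists (1 + sum_f_R0 t N). intro n.
  replace (Rabs (a n * Rabs r ^ n)) with (t n)
    by (unfold t; rewrite !Rabs_mult, <- !RPow_abs, Rabs_Rabsolu; reflexivity).
  assert (Ht0 : forall k, 0 <= t k) by (intro; apply Rabs_pos).
  pose proof (cond_pos_sum t N Ht0).
  destruct (Compare_dec.le_lt_dec N n) as [Hn|Hn].
  - specialize (HN n Hn). unfold R_dist in HN. rewrite Rminus_0_r in HN. unfold t at 1. lra.
  - pose proof (sum_f_R0_ge_term t N n Ht0 ltac:(lia)). lra.
Qed.

Lemma PSeries_ge_coef0 (a : nat -> R) (z : R) :
  (forall n, 0 <= a n) -> 0 <= z -> Rbar_lt (Rabs z) (CV_radius a) -> a O <= PSeries a z.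
Proof.
  intros Ha Hz Hr. rewrite (PSeries_decr_1 a z (CV_radius_inside _ _ Hr)).
  assert (Hr' : Rbar_lt (Rabs z) (CV_radius (PS_decr_1 a))) by (rewrite CV_radius_decr_1; auto).
  assert (0 <= PSeries (PS_decr_1 a) z).
  { apply (is_series_ge0 _ _ (fun n => Rmult_le_pos _ _ (Ha (S n)) (pow_le z n Hz))).
    now apply is_series_PSeries. }
  pose proof (Rmult_le_pos _ _ Hz H). lra.
Qed.

Lemma PSeries_coef0_unique_right (a b : nat -> R) (eps : R) : 0 < eps ->
  Rbar_le eps (CV_radius a) -> Rbar_le eps (CV_radius b) ->
  (forall x, 0 < x < eps -> PSeries a x = PSeries b x) -> a O = b O.
Proof.
  intros He Ha Hb H.
  assert (Hc : forall c, Rbar_le eps (CV_radius c) -> continuity_pt (PSeries c) 0).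
  { intros c Hcr. apply PSeries_continuity. eapply Rbar_lt_Rabs; eauto. rewrite Rabs_R0; lra. }
  destruct (Req_dec (a O) (b O)) as [E|NE]; auto. exfalso.
  set (d := Rabs (a O - b O) / 2).
  assert (Hd : 0 < d) by (unfold d; apply Rdiv_lt_0_compat; [apply Rabs_pos_lt; lra | lra]).
  destruct (Hc a Ha d Hd) as [da [Hda Ha']]. destruct (Hc b Hb d Hd) as [db [Hdb Hb']].
  set (x := Rmin eps (Rmin da db) / 2).
  assert (Hm : 0 < Rmin eps (Rmin da db)) by (repeat apply Rmin_glb_lt; lra).
  pose proof (Rmin_l eps (Rmin da db)). pose proof (Rmin_r eps (Rmin da db)).
  pose proof (Rmin_l da db). pose proof (Rmin_r da db).
  assert (Hx : 0 < x < eps) by (unfold x; lra).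
  assert (Dx : forall r, r = da \/ r = db -> D_x no_cond 0 x /\ R_dist x 0 < r).
  { intros r Hr. split; [split; [constructor | lra]|].
    unfold R_dist. rewrite Rminus_0_r, Rabs_pos_eq by lra. unfold x. lra. }
  specialize (Ha' x (Dx da (or_introl eq_refl))). specialize (Hb' x (Dx db (or_intror eq_refl))).
  simpl in Ha', Hb'. unfold R_dist in *. rewrite !PSeries_0, (H x Hx) in *.
  assert (Rabs (a O - b O) <= Rabs (PSeries b x - a O) + Rabs (PSeries b x - b O)).
  { replace (a O - b O) with (-(PSeries b x - a O) + (PSeries b x - b O)) by ring.
    eapply Rle_trans; [apply Rabs_triang|]. rewrite Rabs_Ropp. lra. }
  unfold d in *. lra.
Qed.

Lemma PSeries_coef_unique_right (a b : nat -> R) (eps : R) : 0 < eps ->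
  Rbar_le eps (CV_radius a) -> Rbar_le eps (CV_radius b) ->
  (forall x, 0 < x < eps -> PSeries a x = PSeries b x) -> forall n, a n = b n.
Proof.
  intros He Ha Hb H n. revert a b Ha Hb H. induction n as [|n IHn]; intros a b Ha Hb H.
  - eapply PSeries_coef0_unique_right; eauto.
  - change (PS_decr_1 a n = PS_decr_1 b n).
    apply IHn; try (rewrite CV_radius_decr_1; auto).
    intros x Hx. assert (E0 : a O = b O) by (eapply PSeries_coef0_unique_right; eauto).
    assert (Hxa : Rbar_lt (Rabs x) (CV_radius a))
      by (eapply Rbar_lt_Rabs; eauto; rewrite Rabs_pos_eq; lra).
    assert (Hxb : Rbar_lt (Rabs x) (CV_radius b))
      by (eapply Rbar_lt_Rabs; eauto; rewrite Rabs_pos_eq; lra).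
    pose proof (H x Hx) as Hx'.
    rewrite (PSeries_decr_1 a x (CV_radius_inside _ _ Hxa)),
      (PSeries_decr_1 b x (CV_radius_inside _ _ Hxb)), E0 in Hx'.
    apply Rmult_eq_reg_l with x; lra.
Qed.

Lemma is_derive_continuity_pt (f : R -> R) (x l : R) : is_derive f x l -> continuity_pt f x.
Proof. intro H. apply derivable_continuous_pt. exists l. now apply is_derive_Reals. Qed.

Lemma is_derive_0_const (f : R -> R) (a b : R) :
  (forall x, a < x < b -> is_derive f x 0) ->
  forall x y, a < x < b -> a < y < b -> f x = f y.
Proof.
  intros H x y Hx Hy.
  assert (Hin : forall t, Rmin x y <= t <= Rmax x y -> a < t < b).
  { intros t Ht. split.
    - apply Rlt_le_trans with (Rmin x y); [apply Rmin_glb_lt|]; lra.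
    - apply Rle_lt_trans with (Rmax x y); [|apply Rmax_lub_lt]; lra. }
  destruct (MVT_gen f x y (fun _ => 0)) as [c [_ Hc]].
  - intros t Ht. apply H, Hin. lra.
  - intros t Ht. eapply is_derive_continuity_pt, H, Hin, Ht.
  - lra.
Qed.

Lemma weighted_const_eq0 (D w : R -> R) (s : R) : 0 < s ->
  continuity_pt D 0 -> D 0 = 0 -> (forall z, 0 < z < s -> 0 < w z <= 1) ->
  (forall x y, 0 < x < s -> 0 < y < s -> D x * w x = D y * w y) ->
  forall z, 0 < z < s -> D z = 0.
Proof.
  intros Hs HD HD0 Hw Hc z Hz. destruct (Req_dec (D z) 0) as [|Hne]; auto. exfalso.
  set (c := Rabs (D z * w z)).
  assert (Hcp : 0 < c) by (apply Rabs_pos_lt, Rmult_integral_contrapositive; split;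
                            [|apply Rgt_not_eq, Hw]; auto).
  destruct (HD c Hcp) as [del [Hdel Hd]].
  set (y := Rmin del s / 2).
  pose proof (Rmin_l del s). pose proof (Rmin_r del s).
  assert (0 < Rmin del s) by (apply Rmin_glb_lt; lra).
  assert (Hy : 0 < y < s) by (unfold y; lra).
  assert (HDy : Rabs (D y) < c).
  { replace (D y) with (D y - D 0) by (rewrite HD0; ring).
    apply Hd. split; [split; [constructor | lra]|].
    simpl. unfold R_dist. rewrite Rminus_0_r, Rabs_pos_eq; unfold y; lra. }
  unfold c in HDy. rewrite (Hc z y Hz Hy), Rabs_mult, (Rabs_pos_eq (w y)) in HDy
    by (apply Rlt_le, Hw; auto).
  destruct (Hw y Hy). pose proof (Rabs_pos (D y)). nra.
Qed.

(** * The coefficients q_k as series in q *)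

Definition hyp1_coef (g : R) (n : nat) : R := g / (g + INR n).

Lemma hyp1_coef_bound (g : R) (n : nat) : 0 < g -> 0 < hyp1_coef g n <= 1.
Proof.
  intro Hg. unfold hyp1_coef. pose proof (pos_INR n). split.
  - apply Rdiv_lt_0_compat; lra.
  - apply Rmult_le_reg_r with (g + INR n); [lra|]. field_simplify; lra.
Qed.

Lemma CV_radius_hyp1_coef (g : R) : 0 < g -> Rbar_le 1 (CV_radius (hyp1_coef g)).
Proof.
  intro Hg. apply CV_radius_ge_1 with 1. intro n.
  destruct (hyp1_coef_bound g n Hg). rewrite Rabs_pos_eq; lra.
Qed.

Lemma hyp2F1_1_PSeries (g x : R) : 0 < g -> Rabs x < 1 ->
  hyp2F1 1 g (1 + g) x = PSeries (hyp1_coef g) x.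
Proof.
  intros Hg Hx. unfold hyp2F1. apply series_sum_eq, is_series_Reals.
  eapply is_series_Rext;
    [|apply is_series_PSeries; eapply Rbar_lt_Rabs; [apply CV_radius_hyp1_coef|]; eauto].
  intro n. unfold hyp2F1_term, hyp1_coef. rewrite poch1.
  pose proof (INR_fact_neq_0 n). pose proof (pos_INR n).
  pose proof (poch_gt0 (g + 1) n ltac:(lra)).
  assert (E : poch g n = g * poch (g + 1) n / (g + INR n))
    by (rewrite <- pochS; simpl; field; lra).
  rewrite (Rplus_comm 1 g), E. field. repeat split; lra.
Qed.

(* q_k = Σ_m qcoef_term k m: for k = K+1 the m-th term of θ K!/(γ+1)_(K+1) times
   2F1(K+1, γ; γ+K+2; q) simplifies to θ γ (K+m)!/(m! (γ+m)_(K+2)) q^m. *)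
Definition qcoef_kernel (g : R) (K m : nat) : R :=
  INR (fact (K + m)) / (INR (fact m) * poch (g + INR m) (S (S K))).

Definition qcoef_term (g q th : R) (k m : nat) : R :=
  match k with
  | O => - (th / g) * (hyp1_coef g m * q ^ m)
  | S K => th * g * qcoef_kernel g K m * q ^ m
  end.

Lemma qcoef_kernel_gt0 (g : R) (K m : nat) : 0 < g -> 0 < qcoef_kernel g K m.
Proof.
  intro Hg. unfold qcoef_kernel. pose proof (pos_INR m).
  pose proof (lt_0_INR _ (lt_O_fact (K + m))). pose proof (lt_0_INR _ (lt_O_fact m)).
  pose proof (poch_gt0 (g + INR m) (S (S K)) ltac:(lra)).
  apply Rdiv_lt_0_compat; [lra | now apply Rmult_lt_0_compat].
Qed.

(* (g+m)_(K+2) = (g+m) (g+m+1)_(K+1) >= (g+m) (m+K+1)!/m! *)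
Lemma qcoef_kernel_le (g : R) (K m : nat) : 0 < g -> g * qcoef_kernel g K m <= 1.
Proof.
  intro Hg. unfold qcoef_kernel. pose proof (pos_INR m).
  set (F := INR (fact m)). set (P := poch (g + INR m + 1) (S K)).
  set (P' := poch (1 + INR m) (S K)).
  assert (HF : 0 < F) by apply (lt_0_INR _ (lt_O_fact m)).
  assert (HP' : 0 < P') by (apply poch_gt0; lra).
  assert (HPP' : P' <= P) by (apply poch_le; lra).
  assert (Hfact : INR (fact (K + m)) <= F * P').
  { unfold F, P'. rewrite <- fact_add_poch. apply le_INR, fact_le. lia. }
  rewrite pochS. fold P.
  assert (HD : 0 < F * ((g + INR m) * P)) by (apply Rmult_lt_0_compat; nra).
  apply Rmult_le_reg_r with (F * ((g + INR m) * P)); [exact HD|].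
  replace (g * (INR (fact (K + m)) / (F * ((g + INR m) * P))) * (F * ((g + INR m) * P)))
    with (g * INR (fact (K + m))) by (field; lra).
  apply Rle_trans with (g * (F * P')); [apply Rmult_le_compat_l; lra|].
  assert (F * P' <= F * P) by (apply Rmult_le_compat_l; lra).
  replace (1 * (F * ((g + INR m) * P))) with ((g + INR m) * (F * P)) by ring.
  apply Rmult_le_compat; nra.
Qed.

Section QcoefSeries.
Variables (g q th : R).
Hypotheses (Hg : 0 < g) (Hq : 0 <= q < 1) (Hth : 0 < th).

Lemma qcoef_term_bound (k m : nat) : Rabs (qcoef_term g q th k m) <= th * (1 + / g) * q ^ m.
Proof.
  pose proof (pow_le q m (proj1 Hq)). assert (0 < / g) by (apply Rinv_0_lt_compat; auto).
  destruct k as [|K]; simpl qcoef_term.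
  - destruct (hyp1_coef_bound g m Hg).
    rewrite Rabs_mult, Rabs_Ropp, Rabs_pos_eq, Rabs_pos_eq by (unfold Rdiv; nra).
    assert (th * / g * (hyp1_coef g m * q ^ m) <= th * / g * q ^ m).
    { apply Rmult_le_compat_l; nra. }
    unfold Rdiv. nra.
  - pose proof (qcoef_kernel_le g K m Hg). pose proof (qcoef_kernel_gt0 g K m Hg).
    assert (0 < g * qcoef_kernel g K m) by nra.
    assert (0 <= th * (g * qcoef_kernel g K m) <= th) by (split; nra).
    replace (th * g * qcoef_kernel g K m * q ^ m) with (th * (g * qcoef_kernel g K m) * q ^ m)
      by ring.
    rewrite Rabs_pos_eq by nra.
    apply Rmult_le_compat_r; [lra|]. assert (0 < th * / g) by nra. lra.
Qed.

Lemma ex_series_Rabs_qcoef_term (k : nat) : ex_series (fun m => Rabs (qcoef_term g q th k m)).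
Proof.
  apply (@ex_series_le R_AbsRing R_CompleteNormedModule _ (fun m => th * (1 + / g) * q ^ m)).
  - intro n. unfold norm; simpl. rewrite Rabs_Rabsolu. apply qcoef_term_bound.
  - eexists. apply is_series_geom_scal. rewrite Rabs_pos_eq; lra.
Qed.

Lemma hyp2F1_term_qcoef_term (K m : nat) :
  hyp2F1_term (INR (S K)) g (1 + g + INR (S K)) q m =
  qcoef_term g q th (S K) m * poch (g + 1) (S K) / (th * INR (fact K)).
Proof.
  unfold hyp2F1_term, qcoef_term, qcoef_kernel. pose proof (pos_INR m). pose proof (pos_INR K).
  pose proof (poch_add (g + 1) (S K) m) as E2.
  pose proof (poch_add g m (S (S K))) as E4.
  replace (m + S (S K))%nat with (S (S K + m)) in E4 by lia.
  rewrite pochS, E2 in E4.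
  replace (1 + g + INR (S K)) with (g + 1 + INR (S K)) by ring.
  replace (INR (S K)) with (1 + INR K) at 1 by (rewrite S_INR; ring).
  rewrite fact_add_poch.
  pose proof (poch_gt0 g m Hg). pose proof (poch_gt0 (g + INR m) (S (S K)) ltac:(lra)).
  pose proof (poch_gt0 (g + 1) (S K) ltac:(lra)).
  pose proof (poch_gt0 (g + 1 + INR (S K)) m ltac:(pose proof (pos_INR (S K)); lra)).
  pose proof (INR_fact_neq_0 m). pose proof (INR_fact_neq_0 K).
  set (A := poch g m) in *. set (B := poch (g + INR m) (S (S K))) in *.
  set (C := poch (g + 1) (S K)) in *. set (D := poch (g + 1 + INR (S K)) m) in *.
  replace A with (g * C * D / B) by (field_simplify_eq; lra).
  field. repeat split; lra.
Qed.

Lemma is_series_qcoef_term (k : nat) : is_series (qcoef_term g q th k) (qcoef th g q k).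
Proof.
  assert (Hqr : Rabs q < 1) by (rewrite Rabs_pos_eq; lra).
  destruct k as [|K].
  - simpl qcoef. rewrite hyp2F1_1_PSeries by auto.
    apply (is_series_Rscal (- (th / g)) (fun m => hyp1_coef g m * q ^ m)).
    apply is_series_PSeries. eapply Rbar_lt_Rabs; [apply CV_radius_hyp1_coef|]; auto.
  - destruct (ex_series_Rabs (qcoef_term g q th (S K)) (ex_series_Rabs_qcoef_term (S K)))
      as [l Hl].
    set (c := th * INR (fact K) / poch (g + 1) (S K)).
    assert (Hc : 0 < c).
    { unfold c. apply Rdiv_lt_0_compat; [|apply poch_gt0; lra].
      apply Rmult_lt_0_compat; auto. apply lt_0_INR, lt_O_fact. }
    assert (Hh : hyp2F1 (INR (S K)) g (1 + g + INR (S K)) q = / c * l).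
    { unfold hyp2F1. apply series_sum_eq, is_series_Reals.
      eapply is_series_Rext; [|apply (is_series_Rscal (/ c) _ _ Hl)].
      intro n. rewrite hyp2F1_term_qcoef_term. unfold c.
      pose proof (poch_gt0 (g + 1) (S K) ltac:(lra)). pose proof (INR_fact_neq_0 K).
      field. repeat split; lra. }
    unfold qcoef. fold c. rewrite Hh, <- Rmult_assoc, Rinv_r, Rmult_1_l by lra. exact Hl.
Qed.

Lemma qcoef_bound (k : nat) : Rabs (qcoef th g q k) <= th * (1 + / g) / (1 - q).
Proof.
  rewrite <- (is_series_unique _ _ (is_series_qcoef_term k)).
  eapply Rle_trans; [apply Series_Rabs, ex_series_Rabs_qcoef_term|].
  assert (Hgeom := is_series_geom_scal (th * (1 + / g)) q ltac:(rewrite Rabs_pos_eq; lra)).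
  rewrite <- (is_series_unique _ _ Hgeom). apply Series_le; [|eexists; eauto].
  intro n. split; [apply Rabs_pos | apply qcoef_term_bound].
Qed.

Lemma CV_radius_qcoef : Rbar_le 1 (CV_radius (qcoef th g q)).
Proof. apply CV_radius_ge_1 with (th * (1 + / g) / (1 - q)). exact qcoef_bound. Qed.

Lemma qcoef_0_lt0 : qcoef th g q O < 0.
Proof.
  simpl qcoef. rewrite hyp2F1_1_PSeries by (auto; rewrite Rabs_pos_eq; lra).
  assert (H1 : hyp1_coef g O <= PSeries (hyp1_coef g) q).
  { apply PSeries_ge_coef0; [intro n; apply Rlt_le, hyp1_coef_bound; auto | lra|].
    eapply Rbar_lt_Rabs; [apply CV_radius_hyp1_coef; auto | rewrite Rabs_pos_eq; lra]. }
  replace (hyp1_coef g O) with 1 in H1 by (unfold hyp1_coef; simpl; field; lra).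
  assert (0 < th / g) by (apply Rdiv_lt_0_compat; auto). nra.
Qed.

End QcoefSeries.

(** * The differential equation of the coefficient series *)

Lemma qcoef_kernel_succ_l (g : R) (K m : nat) : 0 < g ->
  qcoef_kernel g (S K) m * (g + INR m + INR K + 2) = (INR K + INR m + 1) * qcoef_kernel g K m.
Proof.
  intro Hg. unfold qcoef_kernel. pose proof (pos_INR m). pose proof (pos_INR K).
  replace (S K + m)%nat with (S (K + m)) by lia.
  change (fact (S (K + m))) with (S (K + m) * fact (K + m))%nat.
  change (poch (g + INR m) (S (S (S K)))) with
    (poch (g + INR m) (S (S K)) * (g + INR m + INR (S (S K)))).
  rewrite mult_INR, S_INR, plus_INR, !S_INR.
  pose proof (poch_gt0 (g + INR m) (S (S K)) ltac:(lra)). pose proof (INR_fact_neq_0 m).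
  field. repeat split; lra.
Qed.

Lemma qcoef_kernel_succ_r (g : R) (K m : nat) : 0 < g ->
  qcoef_kernel g K (S m) * (INR m + 1) = (g + INR m) * qcoef_kernel g (S K) m.
Proof.
  intro Hg. unfold qcoef_kernel. pose proof (pos_INR m). pose proof (pos_INR K).
  replace (K + S m)%nat with (S K + m)%nat by lia.
  change (fact (S m)) with (S m * fact m)%nat.
  rewrite (pochS (g + INR m) (S (S K))), mult_INR, !S_INR.
  replace (g + (INR m + 1)) with (g + INR m + 1) by ring.
  pose proof (poch_gt0 (g + INR m + 1) (S (S K)) ltac:(lra)). pose proof (INR_fact_neq_0 m).
  field. repeat split; lra.
Qed.

Definition affine_coef (a b : R) (n : nat) : R :=
  match n with O => a | S O => b | _ => 0 end.

Lemma is_series_affine_coef (a b z : R) :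
  is_series (fun n => affine_coef a b n * z ^ n) (a + b * z).
Proof.
  apply is_series_Reals. intros eps He. exists 1%nat. intros n Hn.
  assert (E : forall k, sum_f_R0 (fun n => affine_coef a b n * z ^ n) (S k) = a + b * z).
  { induction k as [|k IHk]; [simpl; ring|]. rewrite tech5, IHk. simpl. ring. }
  destruct n as [|n]; [lia|]. rewrite E. unfold R_dist. rewrite Rminus_eq_0, Rabs_R0. lra.
Qed.

Section QcoefRecurrence.
Variables (g q th : R).
Hypotheses (Hg : 0 < g) (Hq : 0 <= q < 1) (Hth : 0 < th).
Let Q := qcoef th g q.
Let T := qcoef_term g q th.

Lemma qcoef_rec_0 : q * Q 1 - g * (1 - q) * Q 0 = th.
Proof.
  pose proof (is_series_qcoef_term g q th Hg Hq Hth 1) as H1.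
  pose proof (is_series_qcoef_term g q th Hg Hq Hth 0) as H0.
  pose proof (is_series_Rplus _ _ _ _ (is_series_Rscal q _ _ H1)
    (is_series_Rscal (- g) _ _ (is_series_Rincr_1 _ _ H0))) as S1.
  pose proof (is_series_Rplus _ _ _ _ S1 (is_series_Rscal (g * q) _ _ H0)) as S2.
  apply is_series_zero in S2.
  - fold Q in S2. unfold qcoef_term, hyp1_coef in S2. cbn [pow INR] in S2.
    replace (g / (g + 0) * 1) with 1 in S2 by (field; lra).
    replace (- g * (Q O - - (th / g) * 1)) with (- g * Q O - th) in S2 by (field; lra). lra.
  - intro m. unfold qcoef_term, qcoef_kernel, hyp1_coef. simpl poch. cbn [pow]. rewrite S_INR.
    replace (0 + m)%nat with m by lia. pose proof (pos_INR m).
    pose proof (INR_fact_neq_0 m). field. repeat split; lra.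
Qed.

(* The termwise form of [qcoef_rec_S]: it reduces to the two kernel recurrences. *)
Lemma qcoef_term_rec (K m : nat) :
  q * INR (S (S K)) * T (S (S K)) m - (INR (S K) + g) * T (S K) (S m)
  - q * (INR (S K) - g) * T (S K) m + INR K * T K (S m) = 0.
Proof.
  unfold T. pose proof (pos_INR m). pose proof (pos_INR K).
  pose proof (qcoef_kernel_succ_l g K m Hg) as EA. pose proof (qcoef_kernel_succ_r g K m Hg) as EC.
  destruct K as [|K].
  - simpl qcoef_term. cbn [INR] in *. simpl pow.
    set (X := qcoef_kernel g 0 m) in *. set (Y := qcoef_kernel g 1 m) in *.
    set (Z := qcoef_kernel g 0 (S m)) in *.
    replace Z with ((g + INR m) * Y / (INR m + 1)) by (field_simplify_eq; lra).
    replace Y with ((0 + INR m + 1) * X / (g + INR m + 0 + 2)) by (field_simplify_eq; lra).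
    field. lra.
  - pose proof (qcoef_kernel_succ_r g K m Hg) as EC'.
    unfold qcoef_term. rewrite !S_INR in *. simpl pow.
    set (X := qcoef_kernel g (S K) m) in *. set (Y := qcoef_kernel g (S (S K)) m) in *.
    set (Z := qcoef_kernel g (S K) (S m)) in *. set (W := qcoef_kernel g K (S m)) in *.
    replace W with ((g + INR m) * X / (INR m + 1)) by (field_simplify_eq; lra).
    replace Z with ((g + INR m) * Y / (INR m + 1)) by (field_simplify_eq; lra).
    replace Y with ((INR K + 1 + INR m + 1) * X / (g + INR m + (INR K + 1) + 2))
      by (field_simplify_eq; lra).
    field. lra.
Qed.

Lemma qcoef_rec_S (K : nat) :
  q * INR (S (S K)) * Q (S (S K)) - (1 + q) * INR (S K) * Q (S K) + INR K * Q K
   - g * (1 - q) * Q (S K) = match K with O => - th | S _ => 0 end.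
Proof.
  pose proof (is_series_qcoef_term g q th Hg Hq Hth (S (S K))) as H2.
  pose proof (is_series_qcoef_term g q th Hg Hq Hth (S K)) as H1.
  pose proof (is_series_qcoef_term g q th Hg Hq Hth K) as H0.
  pose proof (is_series_Rplus _ _ _ _ (is_series_Rscal (q * INR (S (S K))) _ _ H2)
     (is_series_Rscal (- (INR (S K) + g)) _ _ (is_series_Rincr_1 _ _ H1))) as S1.
  pose proof (is_series_Rplus _ _ _ _ S1 (is_series_Rscal (- (q * (INR (S K) - g))) _ _ H1)) as S2.
  pose proof (is_series_Rplus _ _ _ _ S2
    (is_series_Rscal (INR K) _ _ (is_series_Rincr_1 _ _ H0))) as S3.
  apply is_series_zero in S3; [|intro m; rewrite <- (qcoef_term_rec K m); unfold T; ring].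
  fold Q in S3. pose proof (pos_INR K).
  destruct K as [|K].
  - replace (qcoef_term g q th 1 0) with (th / (g + 1)) in S3
      by (unfold qcoef_term, qcoef_kernel; simpl; field; lra).
    simpl INR in *. apply Rminus_diag_uniq.
    match type of S3 with ?X = _ => transitivity X; [field; lra | exact S3] end.
  - pose proof (qcoef_kernel_succ_l g K 0 Hg) as EA.
    unfold qcoef_term in S3. simpl pow in S3. rewrite !S_INR in *. simpl INR in EA, S3.
    set (X := qcoef_kernel g K 0) in *. set (Y := qcoef_kernel g (S K) 0) in *.
    replace Y with ((INR K + 1) * X / (g + INR K + 2)) in S3 by (field_simplify_eq; lra).
    apply Rminus_diag_uniq.
    match type of S3 with ?X = _ => transitivity X; [field; lra | exact S3] end.
Qed.

(* In coefficient form this ODE is exactly [qcoef_rec_0] and [qcoef_rec_S]. *)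
Lemma qcoef_PSeries_ode (z : R) : Rabs z < 1 ->
  (q - z) * (1 - z) * PSeries (PS_derive Q) z - g * (1 - q) * PSeries Q z = th * (1 - z).
Proof.
  intro Hz. set (d := PS_derive Q).
  assert (H1 : Rbar_lt (Rabs z) (CV_radius Q))
    by (eapply Rbar_lt_Rabs; [apply CV_radius_qcoef|]; auto).
  assert (H2 : Rbar_lt (Rabs z) (CV_radius d)) by (unfold d; rewrite CV_radius_derive; auto).
  pose proof (is_series_PSeries _ _ H1) as SL. pose proof (is_series_PSeries _ _ H2) as SD.
  pose proof SD as SD1. apply is_pseries_R, is_pseries_incr_1, is_pseries_R in SD1.
  pose proof SD1 as SD2. apply is_pseries_R, is_pseries_incr_1, is_pseries_R in SD2.
  change (scal z (PSeries d z)) with (z * PSeries d z) in SD1, SD2.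
  change (scal z (z * PSeries d z)) with (z * (z * PSeries d z)) in SD2.
  pose proof (is_series_Rplus _ _ _ _ (is_series_Rscal q _ _ SD)
    (is_series_Rscal (- (1 + q)) _ _ SD1)) as S1.
  pose proof (is_series_Rplus _ _ _ _ S1 SD2) as S2.
  pose proof (is_series_Rplus _ _ _ _ S2 (is_series_Rscal (- (g * (1 - q))) _ _ SL)) as S3.
  pose proof (is_series_affine_coef th (- th) z) as S4.
  apply is_series_unique in S3. apply is_series_unique in S4.
  rewrite (Series_ext _ (fun n => affine_coef th (- th) n * z ^ n)), S4 in S3.
  - replace (th * (1 - z)) with (th + - th * z) by ring. rewrite S3. ring.
  - intro n. destruct n as [|n].
    + change (PS_incr_1 d 0) with 0. change (PS_incr_1 (PS_incr_1 d) 0) with 0.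
      change (d O) with (INR 1 * Q 1%nat). change (affine_coef th (- th) 0) with th.
      rewrite <- qcoef_rec_0. simpl INR. simpl pow. ring.
    + change (PS_incr_1 d (S n)) with (d n).
      change (PS_incr_1 (PS_incr_1 d) (S n)) with (PS_incr_1 d n).
      assert (E : PS_incr_1 d n = INR n * Q n).
      { destruct n; [|reflexivity]. change (PS_incr_1 d 0) with 0. simpl; ring. }
      assert (E2 : affine_coef th (- th) (S n) = match n with O => - th | S _ => 0 end)
        by (destruct n; reflexivity).
      rewrite E, E2, <- (qcoef_rec_S n). unfold d, PS_derive. ring.
Qed.

End QcoefRecurrence.

(** * The closed form solves the same equation *)

Lemma hyp1_PSeries_ode (g x : R) : 0 < g -> Rabs x < 1 ->
  x * PSeries (PS_derive (hyp1_coef g)) x + g * PSeries (hyp1_coef g) x = g / (1 - x).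
Proof.
  intros Hg Hx.
  assert (H1 : Rbar_lt (Rabs x) (CV_radius (hyp1_coef g)))
    by (eapply Rbar_lt_Rabs; [apply CV_radius_hyp1_coef|]; auto).
  assert (H2 : Rbar_lt (Rabs x) (CV_radius (PS_derive (hyp1_coef g))))
    by (rewrite CV_radius_derive; auto).
  pose proof (is_series_PSeries _ _ H1) as SU. pose proof (is_series_PSeries _ _ H2) as SD.
  apply is_pseries_R, is_pseries_incr_1, is_pseries_R in SD.
  change (scal x (PSeries (PS_derive (hyp1_coef g)) x))
    with (x * PSeries (PS_derive (hyp1_coef g)) x) in SD.
  pose proof (is_series_Rplus _ _ _ _ SD (is_series_Rscal g _ _ SU)) as S.
  rewrite <- (is_series_unique _ _ (is_series_geom_scal g x Hx)), <- (is_series_unique _ _ S).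
  apply Series_ext. intro n. destruct n as [|n].
  - change (PS_incr_1 (PS_derive (hyp1_coef g)) 0) with 0. unfold hyp1_coef. simpl. field. lra.
  - simpl. unfold PS_derive, hyp1_coef. rewrite !S_INR. field. pose proof (pos_INR n). lra.
Qed.

Lemma is_derive_xi (q z : R) : z < 1 -> is_derive (xi q) z ((q - 1) / (1 - z) ^ 2).
Proof. intro Hz. unfold xi. auto_derive; [lra|]. field. lra. Qed.

Lemma Rabs_xi_lt_1 (q z : R) : 0 <= q < 1 -> z < 1 / 2 -> Rabs (xi q z) < 1.
Proof.
  intros Hq Hz. unfold xi. apply Rabs_def1;
    (apply Rmult_lt_reg_r with (1 - z); [lra | field_simplify; lra]).
Qed.

Lemma xi_neq0 (q z : R) : z < 1 -> z <> q -> xi q z <> 0.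
Proof.
  intros Hz Hzq. unfold xi, Rdiv.
  apply Rmult_integral_contrapositive; split; [|apply Rinv_neq_0_compat]; lra.
Qed.

(* |xi|^g, in a form that auto_derive can differentiate wherever xi <> 0 *)
Definition xi_weight (g q t : R) : R := exp (g / 2 * ln (xi q t ^ 2)).

Lemma xi_weight_bound (g q z : R) : 0 < g -> 0 <= q < 1 -> z < 1 / 2 -> z <> q ->
  0 < xi_weight g q z <= 1.
Proof.
  intros Hg Hq Hz Hzq. unfold xi_weight. split; [apply exp_pos|].
  pose proof (Rabs_xi_lt_1 q z Hq Hz) as Hx. apply Rabs_def2 in Hx.
  pose proof (pow2_gt_0 _ (xi_neq0 q z ltac:(lra) Hzq)).
  assert (ln (xi q z ^ 2) < 0) by (rewrite <- ln_1; apply ln_increasing; nra).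
  rewrite <- exp_0. apply Rlt_le, exp_increasing. nra.
Qed.

Lemma is_derive_xi_weight (g q z : R) : z < 1 -> z <> q ->
  is_derive (xi_weight g q) z (xi_weight g q z * (g * (q - 1) / ((1 - z) * (q - z)))).
Proof.
  intros Hz Hzq. pose proof (pow2_gt_0 _ (xi_neq0 q z Hz Hzq)) as Hx0.
  unfold xi_weight, xi in *. auto_derive; [repeat split; [lra | exact Hx0]|].
  set (E := exp (g / 2 * ln (((q - z) / (1 - z)) ^ 2))).
  change (exp (g / 2 * ln ((q + - z) * / (1 + - z) * ((q + - z) * / (1 + - z) * 1)))) with E.
  field. repeat split; lra.
Qed.

Lemma exists_right_nbhd_avoiding (q : R) :
  exists s, 0 < s <= 1 / 2 /\ forall z, 0 < z < s -> z <> q.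
Proof.
  destruct (Rlt_le_dec 0 q).
  - exists (Rmin (1 / 2) q). pose proof (Rmin_l (1 / 2) q). pose proof (Rmin_r (1 / 2) q).
    split; [split; [apply Rmin_glb_lt|]|intros z Hz]; lra.
  - exists (1 / 2). split; [|intros z Hz]; lra.
Qed.

Definition hyp_log_pgf (g q th z : R) : R := - (th / g) * PSeries (hyp1_coef g) (xi q z).

Section ClosedForm.
Variables (g q th : R).
Hypotheses (Hg : 0 < g) (Hq : 0 <= q < 1) (Hth : 0 < th).
Let Q := qcoef th g q.
Let D (z : R) : R := hyp_log_pgf g q th z - PSeries Q z.

Lemma hyp_log_pgf_ode (z : R) : z < 1 / 2 ->
  exists d, is_derive (hyp_log_pgf g q th) z d /\
    (q - z) * (1 - z) * d - g * (1 - q) * hyp_log_pgf g q th z = th * (1 - z).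
Proof.
  intro Hz. pose proof (Rabs_xi_lt_1 q z Hq Hz) as Hx.
  assert (H1 : Rbar_lt (Rabs (xi q z)) (CV_radius (hyp1_coef g)))
    by (eapply Rbar_lt_Rabs; [apply CV_radius_hyp1_coef|]; auto).
  pose proof (is_derive_comp _ _ _ _ _ (is_derive_PSeries _ _ H1) (is_derive_xi q z ltac:(lra)))
    as HC.
  eexists. split; [exact (is_derive_scal _ _ (- (th / g)) _ HC)|].
  pose proof (hyp1_PSeries_ode g _ Hg Hx) as Hid. unfold hyp_log_pgf.
  do 2 change (scal ?a ?b) with (a * b).
  set (Dr := PSeries (PS_derive (hyp1_coef g)) (xi q z)) in *.
  set (U := PSeries (hyp1_coef g) (xi q z)) in *.
  assert (E1 : (q - z) * (1 - z) * (- (th / g) * ((q - 1) / (1 - z) ^ 2 * Dr)) =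
     th / g * (1 - q) * (xi q z * Dr)) by (unfold xi; field; split; lra).
  rewrite E1. replace (xi q z * Dr) with (g / (1 - xi q z) - g * U) by lra.
  assert (1 - xi q z <> 0) by (apply Rabs_def2 in Hx; lra).
  unfold xi in *. field. repeat split; lra.
Qed.

Lemma hyp_log_pgf_0 : hyp_log_pgf g q th 0 = Q O.
Proof.
  unfold hyp_log_pgf, Q. simpl qcoef.
  replace (xi q 0) with q by (unfold xi; field).
  rewrite hyp2F1_1_PSeries by (auto; rewrite Rabs_pos_eq; lra). reflexivity.
Qed.

Lemma hyp_log_pgf_diff_ode (z : R) : - 1 / 2 < z < 1 / 2 ->
  exists d, is_derive D z d /\ (q - z) * (1 - z) * d = g * (1 - q) * D z.
Proof.
  intro Hz. assert (Hz1 : Rabs z < 1) by (apply Rabs_def1; lra).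
  destruct (hyp_log_pgf_ode z ltac:(lra)) as [d [Hd Ed]].
  assert (Hr : Rbar_lt (Rabs z) (CV_radius Q))
    by (eapply Rbar_lt_Rabs; [apply CV_radius_qcoef|]; auto).
  pose proof (qcoef_PSeries_ode g q th Hg Hq Hth z Hz1) as EL.
  eexists. split; [exact (is_derive_minus _ _ _ _ _ Hd (is_derive_PSeries _ _ Hr))|].
  unfold D, minus, plus, opp; simpl. fold Q in EL. lra.
Qed.

(* Off z = q the equation says (D |xi|^g)' = 0, and |xi|^g <= 1. *)
Lemma hyp_log_pgf_eq_qcoef_PSeries :
  exists s, 0 < s <= 1 / 2 /\ forall z, 0 < z < s -> hyp_log_pgf g q th z = PSeries Q z.
Proof.
  destruct (exists_right_nbhd_avoiding q) as [s [Hs Hzq]]. exists s. split; [exact Hs|].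
  intros z Hz. apply Rminus_diag_uniq. fold (D z). revert z Hz.
  apply (weighted_const_eq0 D (xi_weight g q) s); try lra.
  - destruct (hyp_log_pgf_diff_ode 0 ltac:(lra)) as [d [Hd _]].
    exact (is_derive_continuity_pt _ _ _ Hd).
  - unfold D. rewrite PSeries_0, hyp_log_pgf_0. ring.
  - intros z Hz. apply xi_weight_bound; auto; lra.
  - apply is_derive_0_const. intros z Hz. specialize (Hzq z Hz).
    destruct (hyp_log_pgf_diff_ode z ltac:(lra)) as [d [Hd Ed]].
    assert (Hd' : d = g * (1 - q) * D z / ((q - z) * (1 - z))).
    { apply Rmult_eq_reg_l with ((q - z) * (1 - z)).
      - rewrite Ed. field. split; lra.
      - apply Rmult_integral_contrapositive; split; lra. }
    replace 0 with (d * xi_weight g q z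
      + D z * (xi_weight g q z * (g * (q - 1) / ((1 - z) * (q - z))))).
    + exact (is_derive_mult _ _ _ _ _ Hd (is_derive_xi_weight g q z ltac:(lra) Hzq) Rmult_comm).
    + rewrite Hd'. field. split; lra.
Qed.

End ClosedForm.

(** * From the logarithm to the law *)

Lemma PS_derive_eq_mult_of_exp (a b : nat -> R) (eps : R) : 0 < eps ->
  Rbar_le eps (CV_radius a) -> Rbar_le eps (CV_radius b) ->
  (forall z, 0 < z < eps -> PSeries a z = exp (PSeries b z)) ->
  forall n, PS_derive a n = PS_mult a (PS_derive b) n.
Proof.
  intros He Ha Hb H.
  assert (Hin : forall c z, Rbar_le eps (CV_radius c) -> 0 <= z < eps ->
                 Rbar_lt (Rabs z) (CV_radius c)).
  { intros c z Hc Hz. eapply Rbar_lt_Rabs; [exact Hc|]. rewrite Rabs_pos_eq; lra. }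
  assert (Hb' : Rbar_le eps (CV_radius (PS_derive b))) by (rewrite CV_radius_derive; auto).
  apply PSeries_coef_unique_right with (eps / 2); [lra | | |].
  - rewrite CV_radius_derive. eapply Rbar_le_trans; [|exact Ha]. simpl; lra.
  - replace (eps / 2) with (Rabs (eps / 2)) by (apply Rabs_pos_eq; lra).
    apply CV_radius_ge_ex_pseries, ex_pseries_mult; apply Hin; auto; lra.
  - intros z Hz. rewrite PSeries_mult by (apply Hin; auto; lra).
    assert (Hloc : locally z (fun t => exp (PSeries b t) = PSeries a t)).
    { apply (filter_imp (fun t => 0 < t /\ t < eps)); [intros t Ht; now rewrite H|].
      apply (open_and _ _ (open_gt 0) (open_lt eps)). lra. }
    pose proof (is_derive_PSeries a z (Hin a z Ha ltac:(lra))) as Da.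
    pose proof (is_derive_ext_loc _ _ _ _ Hloc (is_derive_comp exp (PSeries b) z _ _
      (is_derive_exp _) (is_derive_PSeries b z (Hin b z Hb ltac:(lra))))) as Db.
    rewrite <- (is_derive_unique _ _ _ Da), (is_derive_unique _ _ _ Db), <- H by lra.
    apply Rmult_comm.
Qed.

(* Conversely, the coefficient identity says (G exp(-L))' = 0 for G = exp L. *)
Lemma PSeries_eq_exp_of_PS_derive (a b : nat -> R) (r : R) :
  Rbar_le r (CV_radius a) -> Rbar_le r (CV_radius b) -> a O = exp (b O) ->
  (forall n, PS_derive a n = PS_mult a (PS_derive b) n) ->
  forall z, Rabs z < r -> PSeries a z = exp (PSeries b z).
Proof.
  intros Ha Hb H0 Hd z Hz.
  set (h := fun t => PSeries a t * exp (- PSeries b t)).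
  assert (Hh : forall t, - r < t < r -> is_derive h t 0).
  { intros t Ht. assert (Htr : Rabs t < r) by (apply Rabs_def1; lra).
    assert (Ra : Rbar_lt (Rabs t) (CV_radius a)) by (eapply Rbar_lt_Rabs; eauto).
    assert (Rb : Rbar_lt (Rabs t) (CV_radius b)) by (eapply Rbar_lt_Rabs; eauto).
    assert (Rb' : Rbar_lt (Rabs t) (CV_radius (PS_derive b))) by (rewrite CV_radius_derive; auto).
    pose proof (is_derive_comp exp _ t _ _ (is_derive_exp _)
      (is_derive_opp _ _ _ (is_derive_PSeries b t Rb))) as Dexp.
    replace 0 with (PSeries (PS_derive a) t * exp (- PSeries b t) +
      PSeries a t * (- PSeries (PS_derive b) t * exp (- PSeries b t))).
    - exact (is_derive_mult _ _ _ _ _ (is_derive_PSeries a t Ra) Dexp Rmult_comm).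
    - erewrite PSeries_ext; [|exact Hd]. rewrite PSeries_mult by auto. ring. }
  assert (Hr : 0 < r) by (pose proof (Rabs_pos z); lra).
  assert (Hhz : h z = h 0) by (apply (is_derive_0_const h (- r) r Hh); apply Rabs_def2 in Hz; lra).
  unfold h in Hhz. rewrite !PSeries_0, H0, <- exp_plus, Rplus_opp_r, exp_0 in Hhz.
  apply Rmult_eq_reg_r with (exp (- PSeries b z)); [|apply Rgt_not_eq, exp_pos].
  rewrite Hhz, <- exp_plus, Rplus_opp_r, exp_0. reflexivity.
Qed.

Lemma CV_radius_law (p : nat -> R) :
  (forall n, 0 <= p n) -> infinite_sum p 1 -> Rbar_le 1 (CV_radius p).
Proof.
  intros Hp Hsum. apply CV_radius_ge_1 with 1. intro n. rewrite Rabs_pos_eq by auto.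
  pose proof (sum_f_R0_ge_term p n n Hp (le_n n)). pose proof (sum_incr p n 1 Hsum Hp). lra.
Qed.

Lemma pgf_PSeries (p : nat -> R) (z : R) : Rbar_lt (Rabs z) (CV_radius p) -> pgf p z = PSeries p z.
Proof. intro H. apply series_sum_eq, is_series_Reals, is_series_PSeries, H. Qed.

(* [ln 0 = 0] in the standard library, so a negative logarithm certifies [0 < x]. *)
Lemma eq_exp_of_ln_lt0 (x y : R) : 0 <= x -> ln x = y -> y < 0 -> x = exp y.
Proof.
  intros [Hx|<-] Hln Hy; [now rewrite <- Hln, exp_ln|].
  exfalso. unfold ln in Hln. destruct (Rlt_dec 0 0); lra.
Qed.

Lemma law_rec_of_PS_derive (p Q : nat -> R) :
  (forall n, PS_derive p n = PS_mult p (PS_derive Q) n) ->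
  forall n, (1 <= n)%nat ->
  p n = / INR n * sum_f_R0 (fun k => INR (n - k) * Q (n - k)%nat * p k) (n - 1).
Proof.
  intros Hd [|n] Hn; [lia|]. specialize (Hd n).
  unfold PS_derive, PS_mult in Hd. replace (S n - 1)%nat with n by lia.
  rewrite (sum_eq _ (fun k => p k * (INR (S (n - k)) * Q (S (n - k))))).
  - rewrite <- Hd. field. apply not_0_INR. lia.
  - intros k Hk. replace (S n - k)%nat with (S (n - k)) by lia. ring.
Qed.

Section Law.
Variables (g q th : R) (p : nat -> R).
Hypotheses (Hg : 0 < g) (Hq : 0 <= q < 1) (Hth : 0 < th).
Hypotheses (Hp_nonneg : forall n, 0 <= p n) (Hp_sum : infinite_sum p 1).
Hypothesis Hlaw : forall z, 0 <= z < 1 -> -1 < xi q z ->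
  ln (pgf p z) = - (th / g) * hyp2F1 1 g (1 + g) (xi q z).
Let Q := qcoef th g q.

Lemma law_ln_PSeries (z : R) : 0 <= z < 1 / 2 -> ln (PSeries p z) = hyp_log_pgf g q th z.
Proof.
  intro Hz. pose proof (Rabs_xi_lt_1 q z Hq ltac:(lra)) as Hx.
  rewrite <- pgf_PSeries, Hlaw, hyp2F1_1_PSeries; auto; try (apply Rabs_def2 in Hx; lra).
  eapply Rbar_lt_Rabs; [apply CV_radius_law; auto | rewrite Rabs_pos_eq; lra].
Qed.

Lemma law_0 : p O = exp (Q O).
Proof.
  apply eq_exp_of_ln_lt0; [auto | | apply qcoef_0_lt0; auto].
  rewrite <- PSeries_0, law_ln_PSeries, hyp_log_pgf_0 by (auto; lra). reflexivity.
Qed.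

Lemma law_PSeries_eq_exp_right :
  exists s, 0 < s <= 1 / 2 /\ forall z, 0 < z < s -> PSeries p z = exp (PSeries Q z).
Proof.
  destruct (hyp_log_pgf_eq_qcoef_PSeries g q th Hg Hq Hth) as [s [Hs HPhi]].
  exists s. split; [exact Hs|]. intros z Hz.
  rewrite <- HPhi, <- law_ln_PSeries by (auto; lra). rewrite exp_ln; [reflexivity|].
  apply Rlt_le_trans with (p O); [rewrite law_0; apply exp_pos|].
  apply PSeries_ge_coef0; auto; [lra|].
  eapply Rbar_lt_Rabs; [apply CV_radius_law; auto | rewrite Rabs_pos_eq; lra].
Qed.

End Law.

Theorem mainTheorem10 (delta alpha beta theta : R) (p : nat -> R)
  (Hdelta : 0 < delta) (Hab : beta < alpha) (Hb : 0 <= beta) (Htheta : 0 < theta)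
  (Hp_nonneg : forall n, 0 <= p n)
  (Hp_sum : infinite_sum p 1)
  (Hlaw : forall z, 0 <= z < 1 -> -1 < xi (beta / alpha) z ->
     ln (pgf p z) = - (theta / (delta / (alpha - beta)))
         * hyp2F1 1 (delta / (alpha - beta)) (1 + delta / (alpha - beta))
                  (xi (beta / alpha) z)) :
  let gamma := delta / (alpha - beta) in
  let q := beta / alpha in
  (exists r, 0 < r /\ forall z, Rabs z < r ->
     infinite_sum (fun k => qcoef theta gamma q k * z ^ k) (ln (pgf p z)))
  /\ p 0%nat = exp (qcoef theta gamma q 0)
  /\ (forall n : nat, (1 <= n)%nat ->
        p n = / INR n * sum_f_R0 (fun k => INR (n - k) * qcoef theta gamma q (n - k) * p k)
                                 (n - 1)).
Proof.
  intros g q. fold g q in Hlaw.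
  assert (Hg : 0 < g) by (apply Rdiv_lt_0_compat; lra).
  assert (Hq : 0 <= q < 1).
  { split; [apply Rdiv_le_0_compat; lra|].
    apply Rmult_lt_reg_r with alpha; [lra|]. unfold q. field_simplify; lra. }
  clearbody g q. set (Q := qcoef theta g q).
  pose proof (CV_radius_law p Hp_nonneg Hp_sum) as Hrp.
  pose proof (CV_radius_qcoef g q theta Hg Hq Htheta) as HrQ.
  pose proof (law_0 g q theta p Hg Hq Htheta Hp_nonneg Hp_sum Hlaw) as Hp0.
  destruct (law_PSeries_eq_exp_right g q theta p Hg Hq Htheta Hp_nonneg Hp_sum Hlaw)
    as [s [Hs HG]].
  assert (Hcoef := PS_derive_eq_mult_of_exp p Q s ltac:(lra)
    ltac:(eapply Rbar_le_trans; [|exact Hrp]; simpl; lra)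
    ltac:(eapply Rbar_le_trans; [|exact HrQ]; simpl; lra) HG).
  split; [|split; [exact Hp0 | exact (law_rec_of_PS_derive p Q Hcoef)]].
  exists 1. split; [lra|]. intros z Hz.
  assert (Hin : forall c, Rbar_le 1 (CV_radius c) -> Rbar_lt (Rabs z) (CV_radius c))
    by (intros; eapply Rbar_lt_Rabs; eauto).
  rewrite pgf_PSeries, (PSeries_eq_exp_of_PS_derive p Q 1 Hrp HrQ Hp0 Hcoef z Hz), ln_exp
    by auto.
  apply is_series_Reals, is_series_PSeries; auto.
Qed.
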